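(* Let $G$ be a topological group whose torsion part $\mathrm{tor}(G)$ is dense in $G$ and totally disconnected. Then a $G$-regular space $X$ is totally disconnected if and only if $\mathrm{tor}(C_p(X,G))$ is dense in $C_p(X,G)$.
   Context: All spaces are Tychonoff and non-empty; topological groups are Hausdorff; $e$ is the identity. For a group $K$, $\mathrm{tor}(K)=\{g\in K: g^n=e\text{ for some } n\ge1\}$. $C_p(X,G)$ is the group of continuous maps $X\to G$ with pointwise operations and the topology of pointwise convergence. $X$ is $G$-regular if for every closed $F\subseteq X$ and every $x\in X\setminus F$ there exist $f\in C_p(X,G)$ and $g\in G\setminus\{e\}$ with $f(x)=g$ and $f(F)\subseteq\{e\}$. A space is totally disconnected if for every two distinct points $x,y$ there is a clopen set containing $x$ but not $y$. *)

From HB Require Import structures.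
From mathcomp Require Import all_boot all_order all_algebra.
From mathcomp Require Import all_classical all_reals all_analysis.
Set Implicit Arguments. Unset Strict Implicit. Unset Printing Implicit Defensive.
Local Open Scope classical_set_scope.

Definition is_topological_group (G : topologicalType)
  (mul : G -> G -> G) (inv : G -> G) (e : G) : Prop :=
  [/\ (forall x y z, mul x (mul y z) = mul (mul x y) z),
      (forall x, mul e x = x /\ mul x e = x),
      (forall x, mul (inv x) x = e /\ mul x (inv x) = e),
      continuous (fun p : G * G => mul p.1 p.2) &
      continuous inv /\ hausdorff_space G].

Fixpoint gpow {G : Type} (mul : G -> G -> G) (e : G) (g : G) (n : nat) : G :=
  match n with
  | O => e
  | S m => mul g (gpow mul e g m)
  end.

Definition tor {G : Type} (mul : G -> G -> G) (e : G) : set G :=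
  [set g | exists n : nat, (1 <= n)%N /\ gpow mul e g n = e].

Definition tychonoff_space (X : topologicalType) : Prop :=
  completely_regular_space X /\ hausdorff_space X.

(* Totally disconnected in the paper's sense, for a subspace A of T:
   any two distinct points of A are separated by a set clopen in A
   (i.e. of the form U ∩ A = V ∩ A with U open and V closed in T). *)
Definition totally_disconnected_sub {T : topologicalType} (A : set T) : Prop :=
  forall x y : T, A x -> A y -> x <> y ->
    exists U V : set T,
      [/\ open U, closed V, U `&` A = V `&` A, U x & ~ U y].

Definition G_regular (X G : topologicalType) (e : G) : Prop :=
  forall (F : set X) (x : X), closed F -> ~ F x ->
    exists (f : X -> G) (g : G),
      [/\ continuous f, g <> e, f x = g & f @` F `<=` [set e]].

(* C_p(X,G): the continuous maps X -> G, as a subset of the space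
   {ptws X -> G} of all maps with the topology of pointwise convergence. *)
Definition Cp (X G : topologicalType) : set {ptws X -> G} :=
  [set f | continuous (f : X -> G)].

Definition pmul {X G : Type} (mul : G -> G -> G) (f h : X -> G) : X -> G :=
  fun x => mul (f x) (h x).
Definition pone {X G : Type} (e : G) : X -> G := fun _ => e.

(* S is dense in the subspace A of T (subspace topology), unfolded:
   every open set of T meeting A meets S ∩ A. *)
Definition dense_in {T : topologicalType} (S A : set T) : Prop :=
  forall W : set T, open W -> W `&` A !=set0 -> W `&` (S `&` A) !=set0.

From HB Require Import structures.
From mathcomp Require Import all_boot all_order all_algebra.
From mathcomp Require Import all_classical all_reals all_analysis.
Local Open Scope classical_set_scope.

(* If X is zero-dimensional, a basic pointwise neighbourhood of f in C_p(X,G)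
   constrains only finitely many values f(x_1), ..., f(x_n).  Since tor(G) is
   dense, each f(x_i) can be approximated by a torsion element, which is then
   spread over a clopen neighbourhood of x_i missing the other x_j; the
   resulting locally constant map takes finitely many torsion values, so it is
   a torsion element of C_p(X,G).  Conversely, for x <> y, G-regularity gives a
   continuous f with f(x) <> e = f(y); density yields a torsion h in C_p(X,G)
   with h(x) <> h(y), and as h takes values in the totally disconnected set
   tor(G), the preimage of a clopen subset of tor(G) separating h(x) from h(y)
   is clopen in X. *)


Section GroupPowers.
Context {G : Type} {mul : G -> G -> G} {e : G}.
Hypothesis mulA : forall x y z, mul x (mul y z) = mul (mul x y) z.
Hypothesis mul1g : forall x, mul e x = x.

Lemma gpowD g m n : gpow mul e g (m + n) = mul (gpow mul e g m) (gpow mul e g n).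
Proof. by elim: m => [|m IH] /=; rewrite ?mul1g // IH mulA. Qed.

Lemma gpowM_eq1 g n k : gpow mul e g n = e -> gpow mul e g (n * k) = e.
Proof.
move=> gn; elim: k => [|k IH]; first by rewrite muln0.
by rewrite mulnS gpowD gn IH mul1g.
Qed.

Lemma gpow_pmul {X : Type} (h : X -> G) n x :
  gpow (@pmul X G mul) (@pone X G e) h n x = gpow mul e (h x) n.
Proof. by elim: n => [|n IH] //=; rewrite /pmul IH. Qed.

Lemma tor_pmulP {X : Type} (h : X -> G) :
  tor (@pmul X G mul) (@pone X G e) h <->
  exists2 n, (1 <= n)%N & forall x, gpow mul e (h x) n = e.
Proof.
split=> [[n [n1 hn]]|[n n1 hn]]; exists n => //.
- by move=> x; rewrite -gpow_pmul hn.
- by split => //; apply/funext => x; rewrite gpow_pmul hn.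
Qed.

Lemma tor_pmul_apply {X : Type} (h : X -> G) x :
  tor (@pmul X G mul) (@pone X G e) h -> tor mul e (h x).
Proof. by move=> /tor_pmulP[n n1 hn]; exists n. Qed.

Lemma tor_pmul_cst {X : Type} {t : G} :
  tor mul e t -> tor (@pmul X G mul) (@pone X G e) (fun=> t).
Proof. by move=> [n [n1 tn]]; apply/tor_pmulP; exists n. Qed.

Lemma tor_pmul_mix {X : Type} {h1 h2 k : X -> G} :
  tor (@pmul X G mul) (@pone X G e) h1 -> tor (@pmul X G mul) (@pone X G e) h2 ->
  (forall x, k x = h1 x \/ k x = h2 x) -> tor (@pmul X G mul) (@pone X G e) k.
Proof.
move=> /tor_pmulP[n1 n1_gt0 h1n] /tor_pmulP[n2 n2_gt0 h2n] kh.
apply/tor_pmulP; exists (n1 * n2)%N; first by rewrite muln_gt0 n1_gt0.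
move=> x; case: (kh x) => ->; first exact: gpowM_eq1.
by rewrite mulnC; exact: gpowM_eq1.
Qed.

End GroupPowers.

Lemma patch_continuous {X Y : topologicalType} {C : set X} {d f : X -> Y} :
  clopen C -> continuous d -> continuous f -> continuous (patch d C f).
Proof.
move=> [oC cC] dc fc z; rewrite /continuous_at.
have [Cz|nCz] := pselect (C z).
- rewrite {2}/patch mem_set //; apply: cvg_trans (fc z); apply: near_eq_cvg.
  have : nbhs z C by apply: open_nbhs_nbhs.
  by apply: filterS => w Cw; rewrite /patch mem_set.
- rewrite {2}/patch memNset //; apply: cvg_trans (dc z); apply: near_eq_cvg.
  have : nbhs z (~` C) by apply: open_nbhs_nbhs; split => //; rewrite openC.
  by apply: filterS => w nCw; rewrite /patch memNset.
Qed.

Lemma zero_dimensional_clopen_avoid {X : topologicalType} (x : X) (s : seq X) :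
  zero_dimensional X ->
  exists C, [/\ clopen C, C x & forall y, y \in s -> y != x -> ~ C y].
Proof.
move=> zdX; elim: s => [|y s [C [cC Cx Cs]]].
  by exists setT; split => //; exact: clopenT.
have [->|yx] := eqVneq y x.
  by exists C; split => // z; rewrite inE => /predU1P[->|/Cs//]; rewrite eqxx.
have [U [cU Ux Uy]] := zdX x y (contra_neq esym yx).
exists (C `&` U); split => //; first exact: clopenI.
by move=> z; rewrite inE => /predU1P[-> _ []//|/Cs zC /zC + []].
Qed.

Lemma nbhs_ptws_basic {X : choiceType} {G : topologicalType} {f : X -> G}
    {W : set {ptws X -> G}} :
  nbhs (f : {ptws X -> G}) W -> exists (s : seq X) (N : X -> set G),
    (forall x, nbhs (f x) (N x)) /\ [set g | forall x, x \in s -> N x (g x)] `<=` W.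
Proof.
pose F (W : set {ptws X -> G}) := exists (s : seq X) (N : X -> set G),
  (forall x, nbhs (f x) (N x)) /\ [set g | forall x, x \in s -> N x (g x)] `<=` W.
have FF : Filter F.
  split.
  - by exists [::], (fun=> setT); split => // x; exact: filterT.
  - move=> A B [s1 [N1 [N1f sA]]] [s2 [N2 [N2f sB]]].
    exists (s1 ++ s2), (fun x => N1 x `&` N2 x); split => [x|g gN].
      exact: filterI.
    split; [apply: sA | apply: sB] => x xs.
      by case: (gN x) => //; rewrite mem_cat xs.
    by case: (gN x) => //; rewrite mem_cat xs orbT.
  - by move=> A B AB [s [N [Nf sA]]]; exists s, N; split => // g /sA/AB.
(* {ptws X -> G} carries the supremum of the initial topologies of the evaluations. *)
apply: (proj2 (@cvg_sup (X -> G) X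
  (fun x => Topological.class (initial_topology (fun g : X -> G => g x))) F f FF)).
move=> x A; rewrite nbhsE => -[_ [[B oB <-] Bfx] BA].
exists [:: x], (fun y => if y == x then B else setT); split => [y|g /(_ x)].
  by case: eqP => [->|_]; [exact: open_nbhs_nbhs | exact: filterT].
by rewrite mem_head eqxx => /(_ isT) Bgx; apply: BA.
Qed.

Section TorsionApproximation.
Context {G : topologicalType} {mul : G -> G -> G} {e : G}.
Hypothesis mulA : forall x y z, mul x (mul y z) = mul (mul x y) z.
Hypothesis mul1g : forall x, mul e x = x.
Hypothesis tor_dense : dense (tor mul e).
Context {X : topologicalType}.
Hypothesis zdX : zero_dimensional X.

Lemma torsion_map_near {f : X -> G} {N : X -> set G} (s : seq X) :
  (forall x, nbhs (f x) (N x)) ->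
  exists2 h : X -> G, continuous h /\ tor (@pmul X G mul) (@pone X G e) h
    & forall x, x \in s -> N x (h x).
Proof.
move=> Nf; elim: s => [|x s [h [hc htor] hN]].
  exists (fun=> e) => //; split; first exact: cst_continuous.
  by apply: tor_pmul_cst; exists 1%N; rewrite /= mul1g.
have [t [Nt tor_t]] : (N x)° `&` tor mul e !=set0.
  by apply: tor_dense; [exists (f x); exact: Nf | exact: open_interior].
have {}Nt := interior_subset Nt.
have [C [cC Cx Cs]] := zero_dimensional_clopen_avoid x s zdX.
exists (patch h C (fun=> t)); first split.
- by apply: patch_continuous => //; exact: cst_continuous.
- apply: (tor_pmul_mix mulA mul1g htor (tor_pmul_cst tor_t)) => y.
  by rewrite /patch; case: ifP; [right | left].
- move=> y; rewrite inE /patch => /predU1P[->|ys]; first by rewrite mem_set.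
  case: ifPn => [/set_mem Cy|_]; last exact: hN.
  by have [->//|yx] := eqVneq y x; have := Cs y ys yx.
Qed.

Lemma dense_in_Cp_tor :
  @dense_in {ptws X -> G} (@Cp X G `&` tor (@pmul X G mul) (@pone X G e)) (@Cp X G).
Proof.
move=> W oW [f [Wf cf]].
have [s [N [Nf sW]]] := nbhs_ptws_basic (open_nbhs_nbhs (conj oW Wf)).
have [h [hc htor] hN] := torsion_map_near s Nf.
by exists h; split; [exact: sW | split].
Qed.

End TorsionApproximation.

Lemma dense_in_Cp_separates {X G : topologicalType} {e : G} {S : set {ptws X -> G}}
    {x y : X} :
  hausdorff_space G -> accessible_space X -> G_regular X e ->
  dense_in S (@Cp X G) -> x != y -> exists h, [/\ S h, @Cp X G h & h x <> h y].
Proof.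
move=> hsdfG accX regX denseS xy.
have [f [g [cf ge fx fy]]] :=
  regX [set y] x (accessible_closed_set1 accX (x:=y)) (fun E => negP xy (introT eqP E)).
have fye : f y = e by apply: fy; exists y.
have : g != e by apply/eqP.
move: hsdfG; rewrite open_hausdorff => /[apply] -[[A B] /= [gA eB] [oA oB /eqP AB0]].
pose W := [set h : {ptws X -> G} | A (h x)] `&` [set h | B (h y)].
have oW : open W.
  by apply: openI; apply: open_comp => // h _; exact: proj_continuous.
have [h [[hA hB] [Sh ch]]] : W `&` (S `&` @Cp X G) !=set0.
  apply: denseS => //; exists f; split => //; split => /=.
  - by rewrite fx; exact: set_mem.
  - by rewrite fye; exact: set_mem.
exists h; split => // hxy.
have : (A `&` B) (h x) by split => //; rewrite hxy.
by rewrite AB0.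
Qed.

Lemma clopen_preimage_separation {X T : topologicalType} {A : set T} {h : X -> T}
    {x y : X} :
  totally_disconnected_sub A -> continuous h -> (forall z, A (h z)) -> h x <> h y ->
  exists U, [/\ clopen U, U x & ~ U y].
Proof.
move=> tdA hc hA hxy.
have [U [V [oU cV UV Ux Uy]]] := tdA _ _ (hA x) (hA y) hxy.
have UVh : h @^-1` U = h @^-1` V.
  apply/seteqP; split => z /= hz.
  - have : (U `&` A) (h z) by split.
    by rewrite UV => -[].
  - have : (V `&` A) (h z) by split.
    by rewrite -UV => -[].
exists (h @^-1` U); split => //; split; first exact: open_comp.
by rewrite UVh; exact: preimage_closed.
Qed.

Theorem theorem8p1 (G : topologicalType) (mul : G -> G -> G) (inv : G -> G)
  (e : G) (HG : is_topological_group mul inv e)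
  (Hdense : dense (tor mul e))
  (Htd : totally_disconnected_sub (tor mul e))
  (X : topologicalType) (HX : tychonoff_space X) (Xne : inhabited X)
  (HXG : @G_regular X G e) :
  zero_dimensional X <->
  @dense_in {ptws X -> G} (@Cp X G `&` tor (@pmul X G mul) (@pone X G e)) (@Cp X G).
Proof.
have [mulA mul1 _ _ [_ hsdfG]] := HG.
have mul1g x : mul e x = x := (mul1 x).1.
split => [zdX | tor_dense x y xy]; first exact: (dense_in_Cp_tor mulA mul1g Hdense).
have accX : accessible_space X by apply: hausdorff_accessible; case: HX.
have [h [[_ htor] hc hxy]] := dense_in_Cp_separates hsdfG accX HXG tor_dense xy.
apply: (clopen_preimage_separation Htd hc _ hxy) => z.
exact: tor_pmul_apply htor.
Qed.
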